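(* Let $\Sigma=(I,X,\mathcal U,\phi,Y,h)$ be a forward complete control system with outputs. If $\Sigma$ is OUAG and OCEP, then it is OULS.
   Context: Let $I\in\{\mathbb N_0,\mathbb R_0^+\}$. A forward complete control system with outputs $\Sigma=(I,X,\mathcal U,\phi,Y,h)$ consists of: a normed space $(X,\|\cdot\|_X)$; a vector space $U$ and a normed linear subspace $(\mathcal U,\|\cdot\|_{\mathcal U})$ of $\{u:I\to U\}$ such that for all $u\in\mathcal U,\tau\in I$, $u(\cdot+\tau)\in\mathcal U$ with $\|u(\cdot+\tau)\|_{\mathcal U}\le\|u\|_{\mathcal U}$, and for $t_2\ge t_1\ge 0$ the function $u|_{[t_1,t_2]}$ ($u$ on $[t_1,t_2]$, $0$ elsewhere) lies in $\mathcal U$ with norm $\le\|u\|_{\mathcal U}$; a map $\phi:I\times X\times\mathcal U\to X$ with $\phi(0,x,u)=x$, causality, and cocycle property $\phi(t+s,x,u)=\phi(s,\phi(t,x,u),u(t+\cdot))$; a normed space $Y$ and $h:X\times U\to Y$. Write $y(t,x,u)=h(\phi(t,x,u),u(t))$, $B_r=\{x:\|x\|_X<r\}$, $B_{r,\mathcal U}=\{u:\|u\|_{\mathcal U}<r\}$; $\mathcal K_\infty$ = unbounded continuous strictly increasing functions $\mathbb R_0^+\to\mathbb R_0^+$ vanishing at $0$. OUAG: $\exists\gamma\in\mathcal K_\infty$ such that for all $\varepsilon,r,s>0$ there is $\tau\in I$ with $\|y(t,x,u)\|_Y\le\varepsilon+\gamma(\|u\|_{\mathcal U})$ for all $x\in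 B_r,u\in B_{s,\mathcal U},t\ge\tau$. OCEP: for every $\tau\in I,\varepsilon>0$ there is $\delta>0$ such that $t\in I$, $t\le\tau$, $\|x\|_X\le\delta$, $\|u\|_{\mathcal U}\le\delta$ imply $\|y(t,x,u)\|_Y\le\varepsilon$. OULS: $\exists r>0,\sigma,\gamma\in\mathcal K_\infty$ with $\|y(t,x,u)\|_Y\le\sigma(\|x\|_X)+\gamma(\|u\|_{\mathcal U})$ for all $x\in B_r,u\in B_{r,\mathcal U},t\in I$ (equivalently: for every $\varepsilon>0$ there is $\delta>0$ such that $\|x\|_X\le\delta$, $\|u\|_{\mathcal U}\le\delta$ imply $\|y(t,x,u)\|_Y\le\varepsilon$ for all $t\in I$). *)

From HB Require Import structures.
From mathcomp Require Import all_boot all_order all_algebra.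
From mathcomp Require Import all_classical all_reals all_analysis.
Set Implicit Arguments. Unset Strict Implicit. Unset Printing Implicit Defensive.
Import Order.TTheory GRing.Theory Num.Theory.
Import numFieldNormedType.Exports.
Local Open Scope classical_set_scope.
Local Open Scope ring_scope.

Section Defs.
Variable R : realType.

Definition time_domain (I : set R) : Prop :=
  I = [set t | exists n : nat, t = n%:R] \/ I = [set t | 0 <= t].

Definition Kinf (f : R -> R) : Prop :=
  [/\ f 0 = 0,
      {within [set x | 0 <= x], continuous f},
      (forall a b, 0 <= a -> a < b -> f a < f b) &
      (forall M, exists s, 0 <= s /\ M < f s)].

(* Forward complete control system with outputs
   Sigma = (I, X, Ucal, phi, Y, h).
   - X, Y : real normed spaces; U : real vector space.
   - Ucal : a normed space together with an injective linear map
     ev : Ucal -> (I -> U) (functions represented on R, only their values on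
     I matter), i.e. Ucal is a normed linear subspace of {u : I -> U}.
   - phi : I x X x Ucal -> X (total: forward completeness). *)
Definition control_system (I : set R) (X : normedModType R) (U : lmodType R)
  (Uc : normedModType R) (ev : Uc -> R -> U) (phi : R -> X -> Uc -> X) : Prop :=
  time_domain I /\
   (forall (a : R) (u v : Uc) t, I t -> ev (a *: u + v) t = a *: ev u t + ev v t) /\
   (forall u v : Uc, (forall t, I t -> ev u t = ev v t) -> u = v) /\
   (forall (u : Uc) tau, I tau -> exists u' : Uc,
       (forall t, I t -> ev u' t = ev u (t + tau)) /\ `|u'| <= `|u|) /\
   (forall (u : Uc) t1 t2, 0 <= t1 -> t1 <= t2 -> exists u' : Uc,
       (forall t, I t -> ev u' t = if (t1 <= t) && (t <= t2) then ev u t else 0)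
       /\ `|u'| <= `|u|) /\
   (forall x u, phi 0 x u = x) /\
   (forall t x (u v : Uc), I t ->
       (forall s, I s -> s <= t -> ev u s = ev v s) -> phi t x u = phi t x v) /\
   (forall t s x (u u' : Uc), I t -> I s ->
       (forall r, I r -> ev u' r = ev u (t + r)) ->
       phi (t + s) x u = phi s (phi t x u) u').

Section Output.
Variables (I : set R) (X : normedModType R) (U : lmodType R)
  (Uc : normedModType R) (ev : Uc -> R -> U) (phi : R -> X -> Uc -> X)
  (Y : normedModType R) (h : X -> U -> Y).

Definition out (t : R) (x : X) (u : Uc) : Y := h (phi t x u) (ev u t).

Definition OUAG : Prop :=
  exists gamma, Kinf gamma /\
  forall eps r s, 0 < eps -> 0 < r -> 0 < s ->
  exists tau, I tau /\
  forall x u t, `|x| < r -> `|u| < s -> I t -> tau <= t ->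
    `|out t x u| <= eps + gamma `|u|.

Definition OCEP : Prop :=
  forall tau eps, I tau -> 0 < eps ->
  exists delta, 0 < delta /\
  forall t x u, I t -> t <= tau -> `|x| <= delta -> `|u| <= delta ->
    `|out t x u| <= eps.

Definition OULS : Prop :=
  exists r sigma gamma, [/\ 0 < r, Kinf sigma, Kinf gamma &
  forall x u t, `|x| < r -> `|u| < r -> I t ->
    `|out t x u| <= sigma `|x| + gamma `|u|].
End Output.
End Defs.

From HB Require Import structures.
From mathcomp Require Import all_boot all_order all_algebra.
From mathcomp Require Import all_classical all_reals all_analysis.
From mathcomp Require Import lra.
Set Implicit Arguments.
Unset Strict Implicit.
Unset Printing Implicit Defensive.

Import Order.TTheory GRing.Theory Num.Theory.
Import numFieldNormedType.Exports.
Local Open Scope classical_set_scope.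
Local Open Scope ring_scope.

(* OUAG bounds the output by eps + gamma |u| after some time tau, and OCEP makes
   it small on [0, tau] for small data, so the output is uniformly small near
   (x, u) = 0.  Such an eps-delta bound upgrades to a K_infinity bound: for the
   pairs (m, v) = (max(|x|, |u|), |y|) with m below a radius, the function
   k(s) = sup v * min(1, s / m) is nondecreasing, vanishes for s <= 0, is small
   near 0 and satisfies k(s') <= (s' / s) k(s) for 0 < s <= s', hence is
   continuous; then k(s) + s is a K_infinity function dominating v at m. *)

Section ClipRatio.
Variable R : realType.
Implicit Types s m : R.

Definition clip_ratio s m : R := Num.min 1 (s / m).

Lemma clip_ratio_le1 s m : clip_ratio s m <= 1.
Proof. by rewrite ge_min lexx. Qed.

Lemma clip_ratio_le s m : clip_ratio s m <= s / m.
Proof. by rewrite ge_min lexx orbT. Qed.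

Lemma clip_ratio_ge0 s m : 0 <= s -> 0 < m -> 0 <= clip_ratio s m.
Proof. by move=> s_ge0 m_gt0; rewrite le_min ler01 divr_ge0 // ltW. Qed.

Lemma clip_ratio_le0 s m : s <= 0 -> 0 < m -> clip_ratio s m <= 0.
Proof.
move=> s_le0 m_gt0; apply: le_trans (clip_ratio_le _ _) _.
by rewrite pmulr_lle0 ?invr_gt0.
Qed.

Lemma clip_ratio_eq1 s m : 0 < m -> m <= s -> clip_ratio s m = 1.
Proof. by move=> m_gt0 ms; apply/min_idPl; rewrite ler_pdivlMr // mul1r. Qed.

Lemma clip_ratio_homo m : 0 < m -> {homo clip_ratio^~ m : s s' / s <= s'}.
Proof.
move=> m_gt0 s s' ss'; rewrite le_min clip_ratio_le1 /=.
by apply: le_trans (clip_ratio_le _ _) _; rewrite ler_pM2r ?invr_gt0.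
Qed.

Lemma clip_ratio_scale s s' m : 0 < s -> s <= s' -> 0 < m ->
  clip_ratio s' m <= s' / s * clip_ratio s m.
Proof.
move=> s_gt0 ss' m_gt0; have [ms|sm] := leP m s.
  rewrite (clip_ratio_eq1 m_gt0 ms) mulr1 (le_trans (clip_ratio_le1 _ _)) //.
  by rewrite ler_pdivlMr // mul1r.
have -> : clip_ratio s m = s / m.
  by apply/min_idPr; rewrite ler_pdivrMr // mul1r ltW.
by rewrite mulrA divfK ?gt_eqF // clip_ratio_le.
Qed.

End ClipRatio.

Section Majorant.
Variables (R : realType) (A : set (R * R)).
Hypotheses (A_fst_ge0 : forall p, A p -> 0 <= p.1)
  (A_snd_ge0 : forall p, A p -> 0 <= p.2)
  (A_snd_le1 : forall p, A p -> p.2 <= 1)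
  (A_small : forall e, 0 < e ->
     exists2 d, 0 < d & forall p, A p -> p.1 <= d -> p.2 <= e).

Definition majorant_set (s : R) : set R :=
  [set w | w = 0 \/ exists p, [/\ A p, 0 < p.1 & w = p.2 * clip_ratio s p.1]].

Definition majorant (s : R) : R := sup (majorant_set s).

Lemma majorant_set_le1 s w : majorant_set s w -> w <= 1.
Proof.
case=> [->|[p [Ap _ ->]]]; first exact: ler01.
by rewrite (le_trans _ (A_snd_le1 Ap)) // ler_piMr ?A_snd_ge0 ?clip_ratio_le1.
Qed.

Lemma has_sup_majorant_set s : has_sup (majorant_set s).
Proof. by split; [exists 0; left | exists 1 => w /majorant_set_le1]. Qed.

Lemma majorant_ub s w : majorant_set s w -> w <= majorant s.
Proof. exact: sup_upper_bound (has_sup_majorant_set s) w. Qed.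

Lemma majorant_least s b :
  (forall w, majorant_set s w -> w <= b) -> majorant s <= b.
Proof. by apply: ge_sup; exists 0; left. Qed.

Lemma majorant_ge0 s : 0 <= majorant s.
Proof. by apply: majorant_ub; left. Qed.

Lemma majorant_le1 s : majorant s <= 1.
Proof. exact/majorant_least/majorant_set_le1. Qed.

Lemma majorant_le0 s : s <= 0 -> majorant s = 0.
Proof.
move=> s_le0; apply/le_anti; rewrite majorant_ge0 andbT.
apply: majorant_least => w [->|[p [Ap p1_gt0 ->]]] //.
exact: mulr_ge0_le0 (A_snd_ge0 Ap) (clip_ratio_le0 s_le0 p1_gt0).
Qed.

Lemma majorant_homo : {homo majorant : s s' / s <= s'}.
Proof.
move=> s s' ss'; apply: majorant_least => w [->|[p [Ap p1_gt0 ->]]].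
  exact: majorant_ge0.
apply: le_trans (majorant_ub (_ : majorant_set s' (p.2 * clip_ratio s' p.1))).
  by rewrite ler_wpM2l ?A_snd_ge0 ?clip_ratio_homo.
by right; exists p.
Qed.

Lemma majorant_scale s s' :
  0 < s -> s <= s' -> majorant s' <= s' / s * majorant s.
Proof.
move=> s_gt0 ss'; have ratio_ge0 : 0 <= s' / s.
  by rewrite divr_ge0 // ltW // (lt_le_trans s_gt0).
apply: majorant_least => w [->|[p [Ap p1_gt0 ->]]].
  by rewrite mulr_ge0 ?majorant_ge0.
rewrite (le_trans (ler_wpM2l (A_snd_ge0 Ap) (clip_ratio_scale s_gt0 ss' p1_gt0))) //.
rewrite mulrCA ler_wpM2l // majorant_ub //.
by right; exists p.
Qed.

Lemma majorant_small e :
  0 < e -> exists2 d, 0 < d & forall s, s <= d -> majorant s <= e.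
Proof.
move=> e_gt0; have [a a_gt0 Aa] := A_small (divr_gt0 e_gt0 (ltr0Sn _ 1)).
exists (e / 2 * a) => [|s s_le]; first by rewrite mulr_gt0 ?divr_gt0.
have [s_le0|s_gt0] := leP s 0; first by rewrite majorant_le0 // ltW.
apply: majorant_least => w [->|[p [Ap p1_gt0 ->]]]; first exact: ltW.
have [p1_le|p1_gt] := leP p.1 a.
  have := Aa p Ap p1_le.
  have : p.2 * clip_ratio s p.1 <= p.2 by rewrite ler_piMr ?A_snd_ge0 ?clip_ratio_le1.
  lra.
have : p.2 * clip_ratio s p.1 <= clip_ratio s p.1.
  by rewrite ler_piMl ?A_snd_le1 ?clip_ratio_ge0 ?ltW.
have := clip_ratio_le s p.1.
have : s / p.1 <= s / a.
  by apply: ler_wpM2l; [exact: ltW | rewrite lef_pV2 ?posrE // ltW].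
have : s / a <= e / 2 by rewrite ler_pdivrMr.
lra.
Qed.

Lemma majorant_lipschitz a s s' : 0 < a -> a <= s -> a <= s' ->
  a * `|majorant s - majorant s'| <= `|s - s'|.
Proof.
move=> a_gt0; wlog ss' : s s' / s <= s' => [wlog_ss'|a_le_s a_le_s'].
  have [ss'|s's] := leP s s'; first exact: wlog_ss'.
  by rewrite distrC (distrC s) => *; apply: wlog_ss' => //; apply: ltW.
have s_gt0 : 0 < s := lt_le_trans a_gt0 a_le_s.
have := majorant_scale s_gt0 ss'; rewrite mulrAC ler_pdivlMr // => scale.
have homo := majorant_homo ss'; have := majorant_ge0 s; have := majorant_le1 s.
rewrite distrC (distrC s) !ger0_norm ?subr_ge0 //.
nra.
Qed.

Lemma continuous_majorant : continuous majorant.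
Proof.
move=> s0; apply/cvgrPdist_le => e e_gt0; apply/nbhs_normP.
have [s0_le0|s0_gt0] := leP s0 0.
  have [d d_gt0 small_d] := majorant_small e_gt0; exists d => // t /= dt.
  rewrite majorant_le0 // sub0r normrN ger0_norm ?majorant_ge0 //.
  by apply: small_d; move: dt; rewrite ltr_norml => /andP[? ?]; lra.
pose a := s0 / 2; have a_gt0 : 0 < a by rewrite divr_gt0.
exists (Num.min a (e * a)) => [|t /=]; first by rewrite /= lt_min a_gt0 mulr_gt0.
rewrite lt_min => /andP[dt_a dt_ea].
have a_le_t : a <= t by move: dt_a; rewrite /a ltr_norml => /andP[? ?]; lra.
rewrite -(ler_pM2l a_gt0) (le_trans (majorant_lipschitz a_gt0 _ a_le_t)) //.
  by rewrite /a; lra.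
by rewrite mulrC ltW.
Qed.

Lemma majorant_dominates p : A p -> p.2 <= majorant p.1.
Proof.
move=> Ap; have [p1_gt0|p1_le0] := ltP 0 p.1.
  by apply: majorant_ub; right; exists p; rewrite clip_ratio_eq1 ?mulr1.
have [p2_le0|p2_gt0] := leP p.2 0; first exact: le_trans p2_le0 (majorant_ge0 _).
have [d d_gt0 small_d] := A_small (divr_gt0 p2_gt0 (ltr0Sn _ 1)).
have := small_d p Ap (le_trans p1_le0 (ltW d_gt0)); lra.
Qed.

Lemma Kinf_majorant : exists sigma, Kinf sigma /\ forall p, A p -> p.2 <= sigma p.1.
Proof.
exists (fun s => majorant s + s); split=> [|p Ap]; last first.
  by rewrite (le_trans (majorant_dominates Ap)) // lerDl A_fst_ge0.
split=> [|||M].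
- by rewrite majorant_le0 ?addr0.
- apply: continuous_subspaceT => s.
  by apply: continuousD; [exact: continuous_majorant | exact: cvg_id].
- by move=> s s' _ ss'; rewrite ler_ltD // majorant_homo // ltW.
- exists (Num.max M 0 + 1); split.
    by rewrite addr_ge0 // le_max lexx orbT.
  have := majorant_ge0 (Num.max M 0 + 1).
  have : M <= Num.max M 0 by rewrite le_max lexx.
  lra.
Qed.

End Majorant.

Lemma Kinf_majorant_near0 (R : realType) (A : set (R * R)) :
  (forall p, A p -> 0 <= p.1) -> (forall p, A p -> 0 <= p.2) ->
  (forall e, 0 < e -> exists2 d, 0 < d & forall p, A p -> p.1 <= d -> p.2 <= e) ->
  exists2 r, 0 < r &
    exists sigma, Kinf sigma /\ forall p, A p -> p.1 <= r -> p.2 <= sigma p.1.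
Proof.
move=> A_fst_ge0 A_snd_ge0 A_small; have [r r_gt0 A_le1] := A_small 1 ltr01.
pose Ar := A `&` [set p | p.1 <= r].
have Ar_small e : 0 < e -> exists2 d, 0 < d & forall p, Ar p -> p.1 <= d -> p.2 <= e.
  by move=> /A_small[d d_gt0 small_d]; exists d => // p [Ap _]; apply: small_d.
have [sigma [Ksigma sigma_ge]] := @Kinf_majorant R Ar
  (fun p Arp => A_fst_ge0 p Arp.1) (fun p Arp => A_snd_ge0 p Arp.1)
  (fun p '(conj Ap p1_le) => A_le1 p Ap p1_le) Ar_small.
by exists r => //; exists sigma; split=> // p Ap p1_le; apply: sigma_ge.
Qed.

Lemma Kinf_ge0 (R : realType) (g : R -> R) s : Kinf g -> 0 <= s -> 0 <= g s.
Proof.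
case=> g0 _ g_incr _; rewrite le_eqVlt => /predU1P[<-|s_gt0]; first by rewrite g0.
by rewrite -g0 ltW // g_incr.
Qed.

Lemma Kinf_max_le_add (R : realType) (g : R -> R) a b :
  Kinf g -> 0 <= a -> 0 <= b -> g (Num.max a b) <= g a + g b.
Proof.
move=> Kg a_ge0 b_ge0; have := Kinf_ge0 Kg a_ge0; have := Kinf_ge0 Kg b_ge0.
by rewrite maxEle; case: (leP a b); lra.
Qed.

Lemma Kinf_small_near0 (R : realType) (g : R -> R) : Kinf g ->
  forall e, 0 < e -> exists2 d, 0 < d & forall s, 0 <= s -> s <= d -> g s <= e.
Proof.
case=> g0 g_cont _ _ e e_gt0.
have nonneg_itv : [set x : R | 0 <= x] = `[0, +oo[%classic.
  by apply/seteqP; split=> x; rewrite /= in_itv /= andbT.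
move: g_cont; rewrite nonneg_itv => /continuous_within_itvcyP[_].
move/cvgrPdist_le/(_ e e_gt0); rewrite near_withinE g0 => /nbhs_normP[d d_gt0 gd].
exists (d / 2) => [|s]; first by rewrite divr_gt0.
rewrite le_eqVlt => /predU1P[<- _|s_gt0 s_le]; first by rewrite g0 ltW.
have s_lt_d : s < d by lra.
have /= := gd s; rewrite sub0r normrN gtr0_norm // => /(_ s_lt_d s_gt0).
by rewrite sub0r normrN; apply: le_trans (ler_norm _).
Qed.

Section OutputSmallness.
Variables (R : realType) (I : set R) (X : normedModType R) (U : lmodType R)
  (Uc : normedModType R) (ev : Uc -> R -> U) (phi : R -> X -> Uc -> X)
  (Y : normedModType R) (h : X -> U -> Y).
Local Notation y := (out ev phi h).

Definition output_small_near0 : Prop :=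
  forall e, 0 < e -> exists2 d, 0 < d &
    forall x u t, `|x| <= d -> `|u| <= d -> I t -> `|y t x u| <= e.

Lemma OUAG_OCEP_small_near0 :
  OUAG I ev phi h -> OCEP I ev phi h -> output_small_near0.
Proof.
move=> [gamma [Kgamma OUAG_gamma]] OCEP_y e e_gt0.
have e2_gt0 : 0 < e / 2 by rewrite divr_gt0.
have [tau [Itau late]] := OUAG_gamma (e / 2) 1 1 e2_gt0 ltr01 ltr01.
have [d1 [d1_gt0 early]] := OCEP_y tau (e / 2) Itau e2_gt0.
have [d2 d2_gt0 gamma_small] := Kinf_small_near0 Kgamma e2_gt0.
exists (Num.min (Num.min d1 d2) (1 / 2)) => [|x u t].
  by rewrite !lt_min d1_gt0 d2_gt0 divr_gt0.
rewrite !le_min => /andP[/andP[x_d1 _] x_half] /andP[/andP[u_d1 u_d2] u_half] It.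
have [t_le|t_gt] := leP t tau.
  by rewrite (le_trans (early t x u It t_le x_d1 u_d1)) //; lra.
have lt1 (z : R) : z <= 1 / 2 -> z < 1 by lra.
rewrite (le_trans (late x u t (lt1 _ x_half) (lt1 _ u_half) It (ltW t_gt))) //.
by rewrite [leRHS](splitr e) lerD2l gamma_small.
Qed.

Lemma small_near0_OULS : output_small_near0 -> OULS I ev phi h.
Proof.
move=> small.
pose A := [set p : R * R | exists x u t, I t /\ p = (Num.max `|x| `|u|, `|y t x u|)].
have A_fst_ge0 p : A p -> 0 <= p.1.
  by move=> [x [u [t [_ ->]]]]; rewrite le_max normr_ge0.
have A_snd_ge0 p : A p -> 0 <= p.2 by move=> [x [u [t [_ ->]]]]; exact: normr_ge0.
have A_small e : 0 < e -> exists2 d, 0 < d & forall p, A p -> p.1 <= d -> p.2 <= e.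
  move=> /small[d d_gt0 small_d]; exists d => // _ [x [u [t [It ->]]]] /=.
  by rewrite ge_max => /andP[x_d u_d]; apply: small_d.
have [r r_gt0 [sigma [Ksigma sigma_ge]]] :=
  Kinf_majorant_near0 A_fst_ge0 A_snd_ge0 A_small.
exists r, sigma, sigma; split=> // x u t x_r u_r It.
rewrite (le_trans _ (Kinf_max_le_add Ksigma (normr_ge0 x) (normr_ge0 u))) //.
by apply: (sigma_ge (_, _)); [exists x, u, t | rewrite /= ge_max !ltW].
Qed.

End OutputSmallness.

Theorem lemma6 (R : realType) (I : set R) (X : normedModType R)
  (U : lmodType R) (Uc : normedModType R) (ev : Uc -> R -> U)
  (phi : R -> X -> Uc -> X) (Y : normedModType R) (h : X -> U -> Y) :
  control_system I ev phi ->
  OUAG I ev phi h -> OCEP I ev phi h -> OULS I ev phi h.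
Proof.
move=> _ ouag ocep.
exact/small_near0_OULS/OUAG_OCEP_small_near0.
Qed.
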